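(* Let $G_1,\dots,G_n,H$ be non-trivial groups such that each $G_i$ is centreless and directly indecomposable, and such that $H$ has no direct factor isomorphic to any $G_i$. Let $G=G_1\times\cdots\times G_n$. Then the automorphisms of $G\times H$ are exactly the maps $(g,h)\mapsto(\alpha(g),\gamma(g)\delta(h))$ with $\alpha\in\operatorname{Aut}(G)$, $\delta\in\operatorname{Aut}(H)$ and $\gamma\in\operatorname{Hom}(G,Z(H))$. In particular, $1\times H$ is characteristic in $G\times H$.
   Context: A group $A$ is directly indecomposable if $A\cong B\times C$ implies $B=1$ or $C=1$. $H$ has a direct factor isomorphic to $A$ if $H\cong A\times N$ for some group $N$. *)

From Stdlib Require Import FunctionalExtensionality.
From mathcomp Require Import all_boot.

Set Implicit Arguments.
Unset Strict Implicit.

Record Grp := MkGrp {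
  gcar :> Type;
  gmul : gcar -> gcar -> gcar;
  gone : gcar;
  ginv : gcar -> gcar;
  gassoc : forall x y z, gmul x (gmul y z) = gmul (gmul x y) z;
  gone_l : forall x, gmul gone x = x;
  ginv_l : forall x, gmul (ginv x) x = gone
}.

Arguments gmul {g}.
Arguments gone {g}.
Arguments ginv {g}.

Definition prodG (B C : Grp) : Grp.
Proof.
refine (@MkGrp (B * C)%type
  (fun p q => (gmul p.1 q.1, gmul p.2 q.2)) (gone, gone)
  (fun p => (ginv p.1, ginv p.2)) _ _ _).
- by move=> [? ?] [? ?] [? ?] /=; rewrite !gassoc.
- by move=> [? ?] /=; rewrite !gone_l.
- by move=> [? ?] /=; rewrite !ginv_l.
Defined.

Definition bigprodG (n : nat) (G : 'I_n -> Grp) : Grp.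
Proof.
refine (@MkGrp (forall i : 'I_n, G i)
  (fun x y i => gmul (x i) (y i)) (fun i => gone)
  (fun x i => ginv (x i)) _ _ _).
- by move=> x y z; apply: functional_extensionality_dep => i; rewrite gassoc.
- by move=> x; apply: functional_extensionality_dep => i; rewrite gone_l.
- by move=> x; apply: functional_extensionality_dep => i; rewrite ginv_l.
Defined.

Definition is_hom (A B : Grp) (f : A -> B) : Prop :=
  forall x y : A, f (gmul x y) = gmul (f x) (f y).

Definition bijective_map (A B : Type) (f : A -> B) : Prop :=
  (forall x y, f x = f y -> x = y) /\ (forall y, exists x, f x = y).

Definition is_iso (A B : Grp) (f : A -> B) : Prop := is_hom f /\ bijective_map f.

Definition isomorphic (A B : Grp) : Prop := exists f : A -> B, is_iso f.

Definition is_aut (A : Grp) (f : A -> A) : Prop := is_iso f.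

Definition trivialG (A : Grp) : Prop := forall x : A, x = gone.

Definition nontrivialG (A : Grp) : Prop := exists x : A, x <> gone.

Definition central (A : Grp) (z : A) : Prop := forall x : A, gmul z x = gmul x z.

Definition centreless (A : Grp) : Prop := forall z : A, central z -> z = gone.

Definition directly_indecomposable (A : Grp) : Prop :=
  forall B C : Grp, isomorphic A (prodG B C) -> trivialG B \/ trivialG C.

Definition has_direct_factor (H A : Grp) : Prop :=
  exists N : Grp, isomorphic H (prodG A N).

Definition is_hom_to_centre (G H : Grp) (g : G -> H) : Prop :=
  is_hom g /\ forall x : G, central (g x).

(* Everything rests on the following observation about a single factor G_i.
   Let theta be an automorphism of G x H and P : G x H -> G_i the surjection
   k |-> (theta k).1 i.  The images B = P(G x 1) and D = P(1 x H) commute and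
   generate G_i, so B /\ D is central, hence trivial, and G_i = B x D
   internally.  By indecomposability B = 1 or D = 1.  If B = 1, then
   P restricted to 1 x H is split by y |-> (theta^-1 (y, 1)).2, whose image
   centralises the kernel, so H = G_i x ker P: excluded by hypothesis.
   Hence D = 1 for every i, i.e. every automorphism maps 1 x H into itself. *)
From mathcomp Require Import all_boot.
From Stdlib Require Import FunctionalExtensionality ProofIrrelevance ClassicalEpsilon.
Set Implicit Arguments. Unset Strict Implicit.

Section GroupLaws.
Variable A : Grp.
Implicit Types x y z : A.

Lemma gmulV x : gmul x (ginv x) = gone.
Proof.
rewrite -{1}(gone_l (gmul x (ginv x))) -(ginv_l (ginv x)) -!gassoc.
by rewrite (gassoc (ginv x) x) ginv_l gone_l ginv_l.
Qed.

Lemma gmul1 x : gmul x gone = x.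
Proof. by rewrite -(ginv_l x) gassoc gmulV gone_l. Qed.

Lemma gmul_cancel_l x y z : gmul x y = gmul x z -> y = z.
Proof. by move=> E; rewrite -(gone_l y) -(ginv_l x) -gassoc E gassoc ginv_l gone_l. Qed.

Lemma gmul_cancel_r x y z : gmul y x = gmul z x -> y = z.
Proof. by move=> E; rewrite -(gmul1 y) -(gmulV x) gassoc E -gassoc gmulV gmul1. Qed.

Lemma ginv1 : ginv (gone : A) = gone.
Proof. by rewrite -{2}(ginv_l gone) gmul1. Qed.
End GroupLaws.

Section Homomorphisms.
Variables (A B : Grp) (f : A -> B).
Hypothesis f_hom : is_hom f.

Lemma hom_one : f gone = gone.
Proof. by apply: (@gmul_cancel_l _ (f gone)); rewrite -f_hom gone_l gmul1. Qed.

Lemma hom_inv x : f (ginv x) = ginv (f x).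
Proof. by apply: (@gmul_cancel_r _ (f x)); rewrite -f_hom !ginv_l hom_one. Qed.
End Homomorphisms.

Lemma iso_inv (A B : Grp) (f : A -> B) : is_iso f ->
  exists g : B -> A, [/\ is_iso g, forall x, g (f x) = x & forall y, f (g y) = y].
Proof.
move=> [f_hom [f_inj f_sur]].
pose g y := proj1_sig (constructive_indefinite_description _ (f_sur y)).
have fK y : f (g y) = y by rewrite /g; case: constructive_indefinite_description.
have gK x : g (f x) = x by apply: f_inj; rewrite fK.
exists g; split=> //; split.
- by move=> x y; apply: f_inj; rewrite f_hom !fK.
- split; first by move=> x y E; rewrite -(fK x) -(fK y) E.
  by move=> y; exists (f y).
Qed.

Lemma isomorphic_of_iso (A B : Grp) (f : B -> A) : is_iso f -> isomorphic A B.
Proof. by move=> /iso_inv [g [g_iso _ _]]; exists g. Qed.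

Lemma prodG_mulE (B C : Grp) (b b' : B) (c c' : C) :
  gmul ((b, c) : prodG B C) (b', c') = (gmul b b', gmul c c').
Proof. by []. Qed.

Lemma prodG_split (B C : Grp) (b : B) (c : C) :
  ((b, c) : prodG B C) = gmul ((b, gone) : prodG B C) (gone, c).
Proof. by rewrite prodG_mulE gmul1 gone_l. Qed.

Definition subG (A : Grp) (S : A -> Prop)
    (S_mul : forall x y, S x -> S y -> S (gmul x y)) (S_one : S gone)
    (S_inv : forall x, S x -> S (ginv x)) : Grp.
Proof.
refine (@MkGrp {x : A | S x}
  (fun p q => exist _ (gmul (proj1_sig p) (proj1_sig q)) (S_mul _ _ (proj2_sig p) (proj2_sig q)))
  (exist _ gone S_one) (fun p => exist _ (ginv (proj1_sig p)) (S_inv _ (proj2_sig p))) _ _ _).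
- by move=> [x ?] [y ?] [z ?]; apply: eq_sig_hprop => /=;
    [move=> *; apply: proof_irrelevance | rewrite gassoc].
- by move=> [x ?]; apply: eq_sig_hprop => /=;
    [move=> *; apply: proof_irrelevance | rewrite gone_l].
- by move=> [x ?]; apply: eq_sig_hprop => /=;
    [move=> *; apply: proof_irrelevance | rewrite ginv_l].
Defined.

Section ImageKernel.
Variables (A K : Grp) (f : A -> K).
Hypothesis f_hom : is_hom f.

Definition in_image (k : K) : Prop := exists a, f a = k.

Lemma in_image_mul x y : in_image x -> in_image y -> in_image (gmul x y).
Proof. by move=> [a <-] [b <-]; exists (gmul a b). Qed.

Lemma in_image_one : in_image gone.
Proof. by exists gone; apply: hom_one. Qed.

Lemma in_image_inv x : in_image x -> in_image (ginv x).
Proof. by move=> [a <-]; exists (ginv a); apply: hom_inv. Qed.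

Definition imageG : Grp := subG in_image_mul in_image_one in_image_inv.

Definition in_kernel (a : A) : Prop := f a = gone.

Lemma in_kernel_mul x y : in_kernel x -> in_kernel y -> in_kernel (gmul x y).
Proof. by rewrite /in_kernel f_hom => -> ->; rewrite gone_l. Qed.

Lemma in_kernel_one : in_kernel gone.
Proof. exact: hom_one. Qed.

Lemma in_kernel_inv x : in_kernel x -> in_kernel (ginv x).
Proof. by rewrite /in_kernel (hom_inv f_hom) => ->; rewrite ginv1. Qed.

Definition kernelG : Grp := subG in_kernel_mul in_kernel_one in_kernel_inv.
End ImageKernel.

Lemma subG_val_hom (A : Grp) S S_mul S_one S_inv :
  is_hom (fun p : @subG A S S_mul S_one S_inv => proj1_sig p).
Proof. by []. Qed.

Lemma subG_val_inj (A : Grp) S S_mul S_one S_inv (p q : @subG A S S_mul S_one S_inv) :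
  proj1_sig p = proj1_sig q -> p = q.
Proof. by move=> E; apply: eq_sig_hprop => // *; apply: proof_irrelevance. Qed.

Lemma internal_direct_product (K B D : Grp) (f : B -> K) (g : D -> K) :
  is_hom f -> is_hom g ->
  (forall x y, f x = f y -> x = y) -> (forall x y, g x = g y -> x = y) ->
  (forall b d, gmul (f b) (g d) = gmul (g d) (f b)) ->
  (forall b d, f b = g d -> f b = gone) ->
  (forall k, exists b d, gmul (f b) (g d) = k) ->
  isomorphic K (prodG B D).
Proof.
move=> f_hom g_hom f_inj g_inj fg_comm fg_meet fg_gen.
apply: (@isomorphic_of_iso _ _ (fun p : prodG B D => gmul (f p.1) (g p.2))).
split; [|split].
- move=> [b1 d1] [b2 d2] /=; rewrite f_hom g_hom -!gassoc; congr gmul.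
  by rewrite !gassoc fg_comm.
- move=> [b1 d1] [b2 d2] /= E.
  have E' : f (gmul (ginv b2) b1) = g (gmul d2 (ginv d1)).
    rewrite f_hom g_hom (hom_inv f_hom) (hom_inv g_hom).
    apply: (@gmul_cancel_l _ (f b2)); apply: (@gmul_cancel_r _ (g d1)).
    by rewrite !gassoc gmulV gone_l -!gassoc ginv_l gmul1 E.
  have eb : b1 = b2.
    apply: f_inj; apply: (@gmul_cancel_l _ (ginv (f b2))).
    by rewrite ginv_l -(hom_inv f_hom) -f_hom (fg_meet _ _ E').
  by subst b2; rewrite (g_inj _ _ (gmul_cancel_l E)).
- move=> k; have [b [d E]] := fg_gen k; by exists (b, d).
Qed.

Lemma surjection_kills_factor (X Y K : Grp) (P : prodG X Y -> K) :
  is_hom P -> (forall k, exists p, P p = k) ->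
  centreless K -> directly_indecomposable K ->
  (forall x, P (x, gone) = gone) \/ (forall y, P (gone, y) = gone).
Proof.
move=> P_hom P_sur K_cl K_ind.
pose P1 (x : X) := P (x, gone); pose P2 (y : Y) := P (gone, y).
have P1_hom : is_hom P1 by move=> x x'; rewrite /P1 -P_hom prodG_mulE gone_l.
have P2_hom : is_hom P2 by move=> y y'; rewrite /P2 -P_hom prodG_mulE gone_l.
have P12 x y : gmul (P1 x) (P2 y) = P (x, y) by rewrite -P_hom prodG_mulE gmul1 gone_l.
have P21 x y : gmul (P2 y) (P1 x) = P (x, y) by rewrite -P_hom prodG_mulE gmul1 gone_l.
pose B := imageG P1_hom; pose D := imageG P2_hom.
have BD_comm (b : B) (d : D) : gmul (proj1_sig b) (proj1_sig d) = gmul (proj1_sig d) (proj1_sig b).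
  by case: b d => [b [x Eb]] [d [y Ed]] /=; rewrite -Eb -Ed P12 P21.
have K_iso : isomorphic K (prodG B D).
  apply: internal_direct_product (@subG_val_hom _ _ _ _ _) (@subG_val_hom _ _ _ _ _)
    (@subG_val_inj _ _ _ _ _) (@subG_val_inj _ _ _ _ _) BD_comm _ _.
  - move=> [b [x Eb]] [d [y Ey]] /=; rewrite -Eb => Exy; apply: K_cl => k.
    have comm1 a : gmul (P1 x) (P1 a) = gmul (P1 a) (P1 x).
      by rewrite {1}Exy -Ey P21 -P12 Ey -Exy.
    have comm2 c : gmul (P1 x) (P2 c) = gmul (P2 c) (P1 x) by rewrite P12 P21.
    have [[a c] <-] := P_sur k.
    by rewrite -P12 gassoc comm1 -!gassoc comm2.
  - move=> k; have [[x y] <-] := P_sur k.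
    by exists (exist _ (P1 x) (ex_intro _ x erefl)), (exist _ (P2 y) (ex_intro _ y erefl)); apply: P12.
case: (K_ind B D K_iso) => [B1 | D1]; [left | right].
- by move=> x; have := f_equal (@proj1_sig _ _) (B1 (exist _ (P1 x) (ex_intro _ x erefl))).
- by move=> y; have := f_equal (@proj1_sig _ _) (D1 (exist _ (P2 y) (ex_intro _ y erefl))).
Qed.

Lemma split_direct_factor (H K : Grp) (Q : H -> K) (s : K -> H) (Q_hom : is_hom Q) :
  is_hom s -> (forall y, Q (s y) = y) ->
  (forall m y, Q m = gone -> gmul m (s y) = gmul (s y) m) ->
  has_direct_factor H K.
Proof.
move=> s_hom sK s_cent; exists (kernelG Q_hom).
apply: (internal_direct_product s_hom (@subG_val_hom _ _ _ _ _) _ (@subG_val_inj _ _ _ _ _)).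
- by move=> y y' E; rewrite -(sK y) E sK.
- by move=> y [m Qm] /=; rewrite s_cent.
- move=> y [m Qm] /= E; have y1 : y = gone by rewrite -(sK y) E.
  by rewrite y1 (hom_one s_hom).
- move=> k; pose y := Q k.
  have Qm : in_kernel Q (gmul (ginv (s y)) k).
    by rewrite /in_kernel Q_hom (hom_inv Q_hom) sK ginv_l.
  by exists y, (exist _ _ Qm); rewrite /= gassoc gmulV gone_l.
Qed.

Definition coord_emb n (Gs : 'I_n -> Grp) (i : 'I_n) (y : Gs i) : bigprodG Gs :=
  fun j => match i =P j with
           | ReflectT E => eq_rect i (fun j => gcar (Gs j)) y j E
           | ReflectF _ => gone
           end.

Lemma coord_embE n (Gs : 'I_n -> Grp) i (y : Gs i) : coord_emb y i = y.
Proof. by rewrite /coord_emb; case: eqP => [E|//]; rewrite (eq_irrelevance E erefl). Qed.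

Lemma coord_emb_hom n (Gs : 'I_n -> Grp) i : is_hom (@coord_emb n Gs i).
Proof.
move=> x y; apply: functional_extensionality_dep => j /=; rewrite /coord_emb.
by case: eqP => [E|_]; [destruct E | rewrite gone_l].
Qed.

Lemma coord_emb_comm n (Gs : 'I_n -> Grp) i (y : Gs i) (x : bigprodG Gs) :
  x i = gone -> gmul x (coord_emb y) = gmul (coord_emb y) x.
Proof.
move=> xi1; apply: functional_extensionality_dep => j /=; rewrite /coord_emb.
case: eqP => [E|_]; last by rewrite gone_l gmul1.
by destruct E; rewrite xi1 gone_l gmul1.
Qed.

Definition second_factor_invariant (G H : Grp) : Prop :=
  forall theta : prodG G H -> prodG G H, is_aut theta ->
  forall h : H, (theta (gone, h)).1 = gone.

Lemma second_factor_invariant_prod n (Gs : 'I_n -> Grp) (H : Grp) :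
  (forall i, centreless (Gs i)) ->
  (forall i, directly_indecomposable (Gs i)) ->
  (forall i, ~ has_direct_factor H (Gs i)) ->
  second_factor_invariant (bigprodG Gs) H.
Proof.
move=> Gs_cl Gs_ind H_nofactor theta theta_aut h.
have [phi [[phi_hom _] phiK thetaK]] := iso_inv theta_aut.
have [theta_hom _] := theta_aut.
apply: functional_extensionality_dep => i.
pose P k := (theta k).1 i : Gs i.
have P_hom : is_hom P by move=> k k'; rewrite /P theta_hom.
have P_sec y : P (phi (coord_emb y, gone)) = y by rewrite /P thetaK /= coord_embE.
have P_sur k : exists p, P p = k by exists (phi (coord_emb k, gone)).
case: (surjection_kills_factor P_hom P_sur (Gs_cl i) (Gs_ind i)) => [P1 | P2]; last exact: P2.
(* If P kills G x 1, its restriction to 1 x H splits and G_i becomes a direct factor of H. *)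
exfalso; apply: (H_nofactor i).
pose Q (m : H) := P (gone, m); pose s (y : Gs i) : H := (phi (coord_emb y, gone)).2.
have Q_hom : is_hom Q by move=> m m'; rewrite /Q -P_hom prodG_mulE gone_l.
apply: (split_direct_factor (s := s) Q_hom).
- move=> y y'; rewrite /s coord_emb_hom -{1}(gone_l (gone : H)).
  by rewrite (phi_hom (coord_emb y, gone) (coord_emb y', gone)).
- move=> y; rewrite -{2}(P_sec y) /Q /s; case: (phi _) => a b.
  by rewrite [in RHS]prodG_split P_hom P1 gone_l.
- move=> m y Qm.
  have comm : gmul (theta (gone, m)) ((coord_emb y, gone) : prodG _ H)
            = gmul ((coord_emb y, gone) : prodG _ H) (theta (gone, m)).
    move: Qm; rewrite /Q /P; case: (theta (gone, m)) => a b ai1.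
    by rewrite !prodG_mulE (@coord_emb_comm _ _ _ _ a ai1) gone_l gmul1.
  by have := f_equal (fun k => (phi k).2) comm; rewrite !phi_hom phiK.
Qed.

Definition standard_form (G H : Grp) (phi : prodG G H -> prodG G H) : Prop :=
  exists (alpha : G -> G) (gamma : G -> H) (delta : H -> H),
    [/\ is_aut alpha, is_aut delta, is_hom_to_centre gamma &
        forall (g : G) (h : H), phi (g, h) = (alpha g, gmul (gamma g) (delta h))].

Lemma standard_form_aut (G H : Grp) (phi : prodG G H -> prodG G H) :
  standard_form phi -> is_aut phi.
Proof.
move=> [al [ga [de [[al_hom [al_inj al_sur]] [de_hom [de_inj de_sur]] [ga_hom ga_cent] E]]]].
split; [|split].
- move=> [g h] [g' h'] /=; rewrite !E /= al_hom ga_hom de_hom; congr pair.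
  rewrite -!gassoc; congr gmul; rewrite !gassoc; congr gmul; exact: ga_cent.
- move=> [g h] [g' h']; rewrite !E => -[e1 e2].
  have eg := al_inj _ _ e1; subst g'; by rewrite (de_inj _ _ (gmul_cancel_l e2)).
- move=> [a b]; have [g eg] := al_sur a; have [h eh] := de_sur (gmul (ginv (ga g)) b).
  by exists (g, h); rewrite E eg eh gassoc gmulV gone_l.
Qed.

Lemma standard_form_second_factor (G H : Grp) (phi : prodG G H -> prodG G H) :
  standard_form phi -> forall p : prodG G H, p.1 = gone <-> (phi p).1 = gone.
Proof.
move=> [al [ga [de [[al_hom [al_inj _]] _ _ E]]]] [g h].
rewrite E /=; split => [-> | e]; first exact: hom_one.
by apply: al_inj; rewrite e (hom_one al_hom).
Qed.

Section StandardFormOfAut.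
Variables (G H : Grp) (phi : prodG G H -> prodG G H).
Hypothesis phi_aut : is_aut phi.
Hypothesis phi_into : forall h : H, (phi (gone, h)).1 = gone.
Hypothesis phi_onto : forall y : H, exists h : H, phi (gone, h) = (gone, y).

Let alpha (g : G) : G := (phi (g, gone)).1.
Let gamma (g : G) : H := (phi (g, gone)).2.
Let delta (h : H) : H := (phi (gone, h)).2.

Let phi_hom : is_hom phi. Proof. by case: phi_aut. Qed.

Let phiE g h : phi (g, h) = (alpha g, gmul (gamma g) (delta h)).
Proof.
rewrite prodG_split phi_hom [phi (g, _)]surjective_pairing [phi (_, h)]surjective_pairing.
by rewrite phi_into prodG_mulE gmul1.
Qed.

Let phi_mul a b c d : phi (gmul a c, gmul b d) = gmul (phi (a, b)) (phi (c, d)).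
Proof. by rewrite -phi_hom. Qed.

Let alpha_hom : is_hom alpha.
Proof. by move=> g g'; rewrite /alpha -{1}(gone_l (gone : H)) phi_mul. Qed.

Let gamma_hom : is_hom gamma.
Proof. by move=> g g'; rewrite /gamma -{1}(gone_l (gone : H)) phi_mul. Qed.

Let delta_hom : is_hom delta.
Proof. by move=> h h'; rewrite /delta -{1}(gone_l (gone : G)) phi_mul. Qed.

Let delta_sur y : exists h, delta h = y.
Proof. by have [h E] := phi_onto y; exists h; rewrite /delta E. Qed.

(* gamma g commutes with delta h: compute phi (g, h) = phi ((1, h) (g, 1)). *)
Let gamma_central g : central (gamma g).
Proof.
move=> x; have [h <-] := delta_sur x.
have := f_equal snd (phi_hom (gone, h) (g, gone)).
rewrite prodG_mulE gmul1 gone_l !phiE /= (hom_one gamma_hom) (hom_one delta_hom).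
by rewrite gone_l gmul1.
Qed.

(* If alpha g = alpha g' then phi (g', 1) = phi (g, h0) for suitable h0. *)
Let alpha_inj g g' : alpha g = alpha g' -> g = g'.
Proof.
move=> e; have [h0 eh0] := delta_sur (gmul (ginv (gamma g)) (gamma g')).
have [_ [phi_inj _]] := phi_aut.
suff : phi (g, h0) = phi (g', gone) by move/phi_inj => -[].
by rewrite !phiE eh0 e (hom_one delta_hom) gmul1 gassoc gmulV gone_l.
Qed.

Lemma aut_standard_form : standard_form phi.
Proof.
have [_ [phi_inj phi_sur]] := phi_aut.
have alpha_sur y : exists g, alpha g = y.
  by have [[a b] E] := phi_sur (y, gone); exists a; move: E; rewrite phiE => -[].
have delta_inj h h' : delta h = delta h' -> h = h'.
  move=> e; have : phi (gone, h) = phi (gone, h') by rewrite !phiE e.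
  by move/phi_inj => -[].
exists alpha, gamma, delta; split.
- exact: (conj alpha_hom (conj alpha_inj alpha_sur)).
- exact: (conj delta_hom (conj delta_inj delta_sur)).
- exact: (conj gamma_hom gamma_central).
- exact: phiE.
Qed.
End StandardFormOfAut.

(* If 1 x H is invariant under all automorphisms, each automorphism maps it
   onto itself (apply invariance to the inverse). *)
Lemma second_factor_onto (G H : Grp) : second_factor_invariant G H ->
  forall phi : prodG G H -> prodG G H, is_aut phi ->
  forall y : H, exists h : H, phi (gone, h) = (gone, y).
Proof.
move=> inv phi phi_aut y; have [psi [psi_aut _ phiK]] := iso_inv phi_aut.
exists (psi (gone, y)).2.
by rewrite -[X in phi (X, _)](inv psi psi_aut y) -surjective_pairing phiK.
Qed.

Lemma aut_iff_standard_form (G H : Grp) : second_factor_invariant G H ->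
  forall phi : prodG G H -> prodG G H, is_aut phi <-> standard_form phi.
Proof.
move=> inv phi; split; last exact: standard_form_aut.
move=> phi_aut; apply: aut_standard_form => //; first exact: inv.
exact: second_factor_onto.
Qed.

Theorem mainTheorem17 (n : nat) (Gs : 'I_n -> Grp) (H : Grp) :
  (forall i, nontrivialG (Gs i)) ->
  nontrivialG H ->
  (forall i, centreless (Gs i)) ->
  (forall i, directly_indecomposable (Gs i)) ->
  (forall i, ~ has_direct_factor H (Gs i)) ->
  let G := bigprodG Gs in
  (forall phi : prodG G H -> prodG G H,
     is_aut phi <->
     exists (alpha : G -> G) (gamma : G -> H) (delta : H -> H),
       [/\ is_aut alpha, is_aut delta, is_hom_to_centre gamma &
           forall (g : G) (h : H),
             phi (g, h) = (alpha g, gmul (gamma g) (delta h))])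
  /\
  (* in particular 1 x H is characteristic in G x H *)
  (forall phi : prodG G H -> prodG G H, is_aut phi ->
     forall p : prodG G H, p.1 = gone <-> (phi p).1 = gone).
Proof.
move=> _ _ Gs_cl Gs_ind H_nofactor G.
have inv := second_factor_invariant_prod Gs_cl Gs_ind H_nofactor.
split; first exact: aut_iff_standard_form.
move=> phi phi_aut; apply: standard_form_second_factor.
by apply/(aut_iff_standard_form inv).
Qed.
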